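(* Let $\Sigma,\Gamma,\Delta$ be polynomial orbit-finite sets with $\Delta$ disjoint from $\Sigma$ and $\Gamma$. If $f:\Sigma^*\to\Gamma^*$ is a composition of primes then so are $\mathsf{map}_\Delta f$ and $\mathsf{sub}_\Delta f$; and if $f:(\Sigma+\Delta)^*\to\Gamma^*$ is a composition of primes then so is $\mathsf{map}'_\Delta f$.
   Context: Atoms $\mathbb A$ are a countably infinite set; polynomial orbit-finite sets are built from $\mathbb A$ and singletons by finite products and disjoint unions; equivariant means commuting with all bijections of $\mathbb A$. Compositions of primes: the smallest class containing (i) length-preserving homomorphisms lifting letterwise an equivariant function between polynomial orbit-finite sets, (ii) classical Mealy machine functions (finite alphabets and states, transition $Q\times\Sigma\to Q\times\Gamma$), (iii) atom propagation $(\mathbb A+\{\epsilon,\downarrow\})^*\to(\mathbb A+\bot)^*$ (position $i$ outputs the atom of position $j$ if $i$ is labelled $\downarrow$, $j<i$ carries an atom, and all positions strictly between are labelled $\epsilon$; otherwise $\bot$), closed under sequential composition and parallel composition $f_1|f_2:(\Sigma_1\times\Sigma_2)^*\to(\Gamma_1\times\Gamma_2)^*$. All such functions are length-preserving. Combinators, for $w_0,\dots,w_n\in\Sigma^*$ and $a_1,\dots,a_n\in\Delta$: $\mathsf{map}_\Delta f(w_0a_1w_1\cdots a_nw_n)=f(w_0)a_1f(w_1)\cdots a_nf(w_n)$; $\mathsf{sub}_\Delta f$ applies $f$ to $w_0w_1\cdots w_n$ and reinserts the separators $a_1,\dots,a_n$ at their original positions; $\mathsf{map}'_\Delta f(w_0a_1w_1\cdots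 a_nw_n)=f(w_0a_1)f(w_1a_2)\cdots f(w_{n-1}a_n)f(w_n)$. *)

From mathcomp Require Import all_boot.

Unset Strict Implicit.
Unset Printing Implicit Defensive.

(** Atoms: a countably infinite set, represented by nat. *)
Definition atom := nat.

(** Polynomial orbit-finite sets: syntax built from the atoms and singletons
    by finite products and finite disjoint unions (including the empty one). *)
Inductive pof : Type :=
| PAtom : pof
| PUnit : pof
| PEmpty : pof
| PProd : pof -> pof -> pof
| PSum : pof -> pof -> pof.

Fixpoint den (X : pof) : Type :=
  match X with
  | PAtom => atom
  | PUnit => unit
  | PEmpty => Empty_set
  | PProd A B => (den A * den B)%type
  | PSum A B => (den A + den B)%type
  end.

Fixpoint act (pi : atom -> atom) (X : pof) : den X -> den X :=
  match X return den X -> den X with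
  | PAtom => fun a => pi a
  | PUnit => fun u => u
  | PEmpty => fun e => e
  | PProd A B => fun p => (act pi A p.1, act pi B p.2)
  | PSum A B => fun s => match s with
                         | inl x => inl (act pi A x)
                         | inr y => inr (act pi B y)
                         end
  end.
Set Implicit Arguments.

Definition equivariant (X Y : pof) (h : den X -> den Y) : Prop :=
  forall pi : atom -> atom, bijective pi ->
    forall x, h (act pi X x) = act pi Y (h x).

Fixpoint atomfree (X : pof) : bool :=
  match X with
  | PAtom => false
  | PUnit | PEmpty => true
  | PProd A B | PSum A B => atomfree A && atomfree B
  end.

Fixpoint mealy_run (Q S G : Type) (delta : Q -> S -> Q * G) (q : Q) (w : seq S)
  : seq G :=
  match w with
  | [::] => [::]
  | x :: w' => (delta q x).2 :: mealy_run delta (delta q x).1 w'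
  end.

(** Atom propagation  (A + {eps, down})^* -> (A + bot)^*.
    Encoding: inl a = atom a, inr (inl tt) = eps, inr (inr tt) = down;
    output inl a = atom a, inr tt = bot. *)
Definition prop_in := PSum PAtom (PSum PUnit PUnit).
Definition prop_out := PSum PAtom PUnit.

Definition not_eps (x : den prop_in) : bool :=
  match x with inr (inl _) => false | _ => true end.

(** Output at a position with letter x, given the reversed prefix rp
    (positions j < i, nearest first).  The nearest position j < i that is
    not labelled eps is the unique candidate: all positions strictly between
    are then eps; the output is its atom if it carries one. *)
Definition prop_letter (rp : seq (den prop_in)) (x : den prop_in) : den prop_out :=
  match x with
  | inr (inr _) =>
      match [seq y <- rp | not_eps y] with
      | inl a :: _ => inl a
      | _ => inr tt
      end
  | _ => inr tt
  end.

Fixpoint prop_aux (rp : seq (den prop_in)) (w : seq (den prop_in))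
  : seq (den prop_out) :=
  match w with
  | [::] => [::]
  | x :: w' => prop_letter rp x :: prop_aux (x :: rp) w'
  end.

Definition atom_propagation (w : seq (den prop_in)) : seq (den prop_out) :=
  prop_aux [::] w.

Unset Implicit Arguments.
Inductive CompPrime : forall (X Y : pof), (seq (den X) -> seq (den Y)) -> Prop :=
| cp_hom : forall X Y (h : den X -> den Y),
    @equivariant X Y h -> CompPrime X Y (map h)
| cp_mealy : forall X Y (Q : finType) (q0 : Q) (delta : Q -> den X -> Q * den Y),
    atomfree X -> atomfree Y -> CompPrime X Y (@mealy_run Q (den X) (den Y) delta q0)
| cp_prop : CompPrime prop_in prop_out atom_propagation
| cp_seq : forall X Y Z f g,
    CompPrime X Y f -> CompPrime Y Z g -> CompPrime X Z (fun w => g (f w))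
| cp_par : forall X1 Y1 X2 Y2 f1 f2,
    CompPrime X1 Y1 f1 -> CompPrime X2 Y2 f2 ->
    CompPrime (PProd X1 X2) (PProd Y1 Y2)
      (fun w => zip (f1 (unzip1 w)) (f2 (unzip2 w)))
| cp_ext : forall X Y (f g : seq (den X) -> seq (den Y)),
    CompPrime X Y f -> (forall w, f w = g w) -> CompPrime X Y g.
Set Implicit Arguments.

(** Combinators.  Words over Sigma u Delta (Delta disjoint) are words over
    the disjoint union Sigma + Delta; separators are the inr letters. *)
Definition getL (A B : Type) (x : A + B) : option A :=
  match x with inl a => Some a | inr _ => None end.
Definition getR (A B : Type) (x : A + B) : option B :=
  match x with inl _ => None | inr b => Some b end.

(** chunks (w0 a1 w1 ... an wn) = [:: w0 a1; w1 a2; ...; w(n-1) an; wn]. *)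
Fixpoint chunks (A B : Type) (w : seq (A + B)) : seq (seq (A + B)) :=
  match w with
  | [::] => [:: [::]]
  | inl x :: w' => let c := chunks w' in (inl x :: head [::] c) :: behead c
  | inr y :: w' => [:: inr y] :: chunks w'
  end.

(** map_Delta f (w0 a1 w1 ... an wn) = f(w0) a1 f(w1) ... an f(wn). *)
Definition mapD (S G D : pof) (f : seq (den S) -> seq (den G))
  (w : seq (den (PSum S D))) : seq (den (PSum G D)) :=
  flatten [seq map inl (f (pmap (@getL _ _) c)) ++ map inr (pmap (@getR _ _) c)
          | c <- chunks w].

Fixpoint reinsert (S G D : Type) (w : seq (S + D)) (v : seq G) : seq (G + D) :=
  match w with
  | [::] => [::]
  | inl _ :: w' => match v with
                   | g :: v' => inl g :: reinsert w' v'
                   | [::] => [::]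
                   end
  | inr a :: w' => inr a :: reinsert w' v
  end.

(** sub_Delta f applies f to w0 w1 ... wn and reinserts a1 ... an. *)
Definition subD (S G D : pof) (f : seq (den S) -> seq (den G))
  (w : seq (den (PSum S D))) : seq (den (PSum G D)) :=
  reinsert w (f (pmap (@getL _ _) w)).

(** map'_Delta f (w0 a1 ... an wn) = f(w0 a1) f(w1 a2) ... f(w(n-1) an) f(wn). *)
Definition mapD' (S G D : pof) (f : seq (den (PSum S D)) -> seq (den G))
  (w : seq (den (PSum S D))) : seq (den G) :=
  flatten [seq f c | c <- chunks w].

Arguments mapD {S G} D f w.
Arguments subD {S G} D f w.
Arguments mapD' {S G} D f w.
Arguments CompPrime X Y f.

From mathcomp Require Import all_boot.

Set Implicit Arguments.
Unset Strict Implicit.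
Unset Printing Implicit Defensive.

(* The three combinators are obtained from a single, more general one.
   A marked word over X with separators K is a word over (X + K) x {unmarked,
   marked}; its blocks are the maximal factors ending at a marked letter (plus
   a final unmarked factor).  For f : X^* -> Y^*, bsub f applies f, in the
   manner of sub, to each block separately, keeping separators and marks.

   The heart of the proof is that bsub f is a composition of primes whenever
   f is, by induction on compositions of primes: homomorphisms lift
   letterwise, sequential and parallel composition commute with bsub, and a
   Mealy machine (classical, or atom propagation viewed as a machine whose
   state is the currently propagated atom) is simulated by a machine of the
   same kind that skips separators and restarts at every mark, run alongside
   the input.

   Then sub = bsub with no marks, map' = bsub with the separators marked and
   no separator letters, and map = map' o sub, since every chunk of the input
   is a Sigma-word followed by at most one separator. *)

Definition length_preserving (A C : Type) (f : seq A -> seq C) : Prop :=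
  forall w, size (f w) = size w.

Lemma size_mealy_run (Q A C : Type) (d : Q -> A -> Q * C) q w :
  size (mealy_run d q w) = size w.
Proof. by elim: w q => //= x w IH q; rewrite IH. Qed.

(* Atom propagation is a Mealy machine whose state is the atom (if any) that
   a "down" letter would receive at the current position. *)
Definition prop_state (rp : seq (den prop_in)) : option atom :=
  if [seq y <- rp | not_eps y] is inl a :: _ then Some a else None.

Definition prop_step (o : option atom) (x : den prop_in) : option atom * den prop_out :=
  match x with
  | inl a => (Some a, inr tt)
  | inr (inl _) => (o, inr tt)
  | inr (inr _) => (None, if o is Some a then inl a else inr tt)
  end.

Lemma prop_aux_mealy rp w : prop_aux rp w = mealy_run prop_step (prop_state rp) w.
Proof.
elim: w rp => //= x w IH rp; rewrite IH.
case: x => [a|[[]|[]]] //=; rewrite /prop_state.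
by case: [seq y <- rp | not_eps y] => [|[b|[[]|[]]] l].
Qed.

Lemma atom_propagation_mealy w : atom_propagation w = mealy_run prop_step None w.
Proof. exact: prop_aux_mealy. Qed.

Lemma CompPrime_length X Y f : CompPrime X Y f -> length_preserving f.
Proof.
elim=> {X Y f} [X Y h _|X Y Q q0 d _ _| |X Y Z f g _ Hf _ Hg
               |X1 Y1 X2 Y2 f1 f2 _ H1 _ H2|X Y f g _ Hf E] w.
- exact: size_map.
- exact: size_mealy_run.
- by rewrite atom_propagation_mealy size_mealy_run.
- by rewrite Hg Hf.
- by rewrite size_zip H1 H2 !size_map minnn.
- by rewrite -E Hf.
Qed.

Section Blocks.
Variables (T : Type) (cut : pred T).

Fixpoint blocks (w : seq T) : seq (seq T) :=
  match w with
  | [::] => [:: [::]]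
  | x :: w' => if cut x then [:: x] :: blocks w'
               else let c := blocks w' in (x :: head [::] c) :: behead c
  end.

Lemma blocks_uncut u : all (predC cut) u -> blocks u = [:: u].
Proof. by elim: u => //= x u IH /andP[/negbTE -> /IH ->]. Qed.

Lemma blocks_cut u x v : all (predC cut) u -> cut x ->
  blocks (u ++ x :: v) = rcons u x :: blocks v.
Proof. by move=> + cx; elim: u => [|y u IH] /=; [rewrite cx|case/andP=> /negbTE -> /IH ->]. Qed.

Lemma flatten_blocks w : flatten (blocks w) = w.
Proof.
elim: w => //= x w; case: (cut x) => /= [->//|].
by case: (blocks w) => [|c cs] //= <-.
Qed.

Lemma cut_ind (P : seq T -> Prop) :
  (forall u, all (predC cut) u -> P u) ->
  (forall u x v, all (predC cut) u -> cut x -> P v -> P (u ++ x :: v)) ->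
  forall w, P w.
Proof.
move=> Hu Hc w; suff /(_ [::] isT) : forall u, all (predC cut) u -> P (u ++ w) by [].
elim: w => [|x w IH] u cu; first by rewrite cats0; apply: Hu.
case cx: (cut x); first by apply: Hc => //; apply: (IH [::]).
by rewrite -cat_rcons; apply: IH; rewrite all_rcons /= cx.
Qed.

End Blocks.

Lemma all_predC_map (T T' : Type) (p : pred T) (p' : pred T') s s' :
  map p' s' = map p s -> all (predC p') s' = all (predC p) s.
Proof. by elim: s s' => [|x s IH] [|y s'] //= [-> /IH ->]. Qed.

Lemma blocks_map (T T' : Type) (cut : pred T) (cut' : pred T') (g : T -> T') :
  (forall x, cut' (g x) = cut x) ->
  forall w, blocks cut' (map g w) = map (map g) (blocks cut w).
Proof.
move=> Hg; elim=> //= x w ->; rewrite Hg; case: (cut x) => //.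
by case: (blocks cut w).
Qed.

Lemma blocks_flatten_map (T T' : Type) (cut : pred T) (cut' : pred T')
    (h : seq T -> seq T') :
  (forall c, map cut' (h c) = map cut c) ->
  forall w, blocks cut' (flatten (map h (blocks cut w))) = map h (blocks cut w).
Proof.
move=> Hh w; elim/(@cut_ind _ cut): w => [u cu|u x v cu cx IH].
  by rewrite (blocks_uncut cu) /= cats0 blocks_uncut // (all_predC_map (Hh u)).
have [s [y [Eh [cs cy]]]] :
    exists s y, h (rcons u x) = rcons s y /\ all (predC cut') s /\ cut' y.
  have := Hh (rcons u x); rewrite map_rcons.
  case/lastP: (h (rcons u x)) => [/(congr1 size)|s y]; first by rewrite size_rcons.
  rewrite map_rcons => /rcons_inj [Es Ey]; exists s, y.
  by rewrite (all_predC_map Es) cu Ey cx.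
by rewrite blocks_cut //= Eh cat_rcons blocks_cut // IH.
Qed.

Section Reinsert.
Variables (A C E K : Type).
Implicit Types (c : seq (A + K)).

Lemma size_reinsert c (v : seq C) :
  size v = size (pmap (@getL _ _) c) -> size (reinsert c v) = size c.
Proof.
elim: c v => [|[a|k] c IH] v //=; last by move=> /IH ->.
by case: v => [|y v] //= /succn_inj /IH ->.
Qed.

Lemma reinsert_getL c (v : seq C) :
  size v = size (pmap (@getL _ _) c) -> pmap (@getL _ _) (reinsert c v) = v.
Proof.
elim: c v => [|[a|k] c IH] v /=; first by case: v.
  by case: v => [|y v] //= /succn_inj /IH ->.
by move=> /IH ->.
Qed.

Lemma reinsert_reinsert c (v : seq C) (v' : seq E) :
  size v = size (pmap (@getL _ _) c) -> reinsert (reinsert c v) v' = reinsert c v'.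
Proof.
elim: c v v' => [|[a|k] c IH] v v' //=; last by move=> /IH ->.
by case: v v' => [|y v] [|y' v'] //= /succn_inj /IH ->.
Qed.

Lemma reinsert_sorted (s : seq A) (t : seq K) (v : seq C) :
  size v = size s -> reinsert (map inl s ++ map inr t) v = map inl v ++ map inr t.
Proof.
elim: s v => [|a s IH] [|y v] //= => [_|/succn_inj /IH ->] //.
by elim: t => //= k t ->.
Qed.

Lemma reinsert_inl (s : seq A) (v : seq C) :
  size v = size s -> reinsert (map inl s : seq (A + K)) v = map inl v.
Proof. by move=> Hv; have := reinsert_sorted [::] Hv; rewrite !cats0. Qed.

End Reinsert.

(* Marked words: every letter carries a mark bit (inr tt = marked). *)
Definition Mark : pof := PSum PUnit PUnit.
Definition Marked (X K : pof) : pof := PProd (PSum X K) Mark.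

Definition is_mark (b : unit + unit) : bool := if b is inr _ then true else false.
Definition marked (T : Type) (p : T * (unit + unit)) : bool := is_mark p.2.

Lemma map_marked (T : Type) (s : seq (T * (unit + unit))) :
  map (@marked T) s = map is_mark (unzip2 s).
Proof. by rewrite -map_comp. Qed.

Definition msub (A C K : Type) (f : seq A -> seq C)
    (c : seq ((A + K) * (unit + unit))) : seq ((C + K) * (unit + unit)) :=
  zip (reinsert (unzip1 c) (f (pmap (@getL _ _) (unzip1 c)))) (unzip2 c).

Definition bsub (A C K : Type) (f : seq A -> seq C)
    (w : seq ((A + K) * (unit + unit))) : seq ((C + K) * (unit + unit)) :=
  flatten (map (msub f) (blocks (@marked _) w)).

Section MarkedSub.
Variables (A C E K : Type).
Local Notation letter X := ((X + K) * (unit + unit))%type.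

Variable f : seq A -> seq C.
Hypothesis f_length : length_preserving f.
Implicit Types (c w : seq (letter A)).

Lemma size_msub_reinsert c :
  size (reinsert (unzip1 c) (f (pmap (@getL _ _) (unzip1 c)))) = size c.
Proof. by rewrite size_reinsert ?f_length // size_map. Qed.

Lemma unzip1_msub c :
  unzip1 (msub f c) = reinsert (unzip1 c) (f (pmap (@getL _ _) (unzip1 c))).
Proof. by rewrite unzip1_zip // size_msub_reinsert size_map. Qed.

Lemma unzip2_msub c : unzip2 (msub f c) = unzip2 c.
Proof. by rewrite unzip2_zip // size_msub_reinsert size_map. Qed.

Lemma size_msub c : size (msub f c) = size c.
Proof. by rewrite size_zip size_msub_reinsert size_map minnn. Qed.

Lemma marks_msub c : map (@marked _) (msub f c) = map (@marked _) c.
Proof. by rewrite !map_marked unzip2_msub. Qed.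

Lemma msub_comp (g : seq C -> seq E) c :
  msub g (msub f c) = msub (fun s => g (f s)) c.
Proof.
rewrite /msub unzip1_msub unzip2_msub reinsert_getL ?reinsert_reinsert //.
all: by rewrite f_length.
Qed.

Lemma bsub_comp (g : seq C -> seq E) w :
  bsub g (bsub f w) = bsub (fun s => g (f s)) w.
Proof.
rewrite /bsub blocks_flatten_map; last exact: marks_msub.
by rewrite -map_comp; congr flatten; apply: eq_map => c; apply: msub_comp.
Qed.

End MarkedSub.

Lemma eq_bsub (A C K : Type) (f g : seq A -> seq C) :
  f =1 g -> @bsub A C K f =1 bsub g.
Proof. by move=> E w; congr flatten; apply: eq_map => c; rewrite /msub E. Qed.

Definition mlift (A C K : Type) (h : A -> C) (p : (A + K) * (unit + unit))
  : (C + K) * (unit + unit) :=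
  (match p.1 with inl a => inl (h a) | inr k => inr k end, p.2).

Lemma marked_mlift (A C K : Type) (h : A -> C) (p : (A + K) * (unit + unit)) :
  marked (mlift h p) = marked p.
Proof. by []. Qed.

Lemma mlift_equivariant (X Y K : pof) (h : den X -> den Y) : equivariant h ->
  equivariant (@mlift (den X) (den Y) (den K) h : den (Marked X K) -> den (Marked Y K)).
Proof. by move=> Hh pi bij [[x|k] b]; rewrite /mlift /= ?Hh. Qed.

Lemma bsub_map (A C K : Type) (h : A -> C) (w : seq ((A + K) * (unit + unit))) :
  bsub (map h) w = map (mlift h) w.
Proof.
have msub_map c : msub (map h) c = map (@mlift A C K h) c.
  by elim: c => [|[[a|k] b] c IH] //=; rewrite -IH.
by rewrite /bsub (eq_map msub_map) -map_flatten flatten_blocks.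
Qed.

Lemma bsub_hom_CompPrime (X Y K : pof) (h : den X -> den Y) : equivariant h ->
  CompPrime (Marked X K) (Marked Y K) (bsub (map h)).
Proof.
move=> Hh; apply: (cp_ext _ _ _ _ (cp_hom _ _ _ (@mlift_equivariant X Y K h Hh))) => w.
by rewrite bsub_map.
Qed.

Lemma zip_flatten_map (T U V : Type) (F : T -> seq U) (G : T -> seq V) s :
  (forall c, size (F c) = size (G c)) ->
  zip (flatten (map F s)) (flatten (map G s)) =
  flatten (map (fun c => zip (F c) (G c)) s).
Proof. by move=> H; elim: s => //= c s <-; rewrite zip_cat. Qed.

Section Parallel.
Variables (A1 A2 C1 C2 K : Type).

(* Recombine the two halves of a pair of marked words.  Both halves carry the
   same separators and marks, so the last case never occurs. *)
Definition pmerge (p : ((C1 + K) * (unit + unit)) * ((C2 + K) * (unit + unit)))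
  : (C1 * C2 + K) * (unit + unit) :=
  match p with
  | ((inl y1, b), (inl y2, _)) => (inl (y1, y2), b)
  | ((inr k, b), _) => (inr k, b)
  | ((inl _, b), (inr k, _)) => (inr k, b)
  end.

Lemma getL_mlift (B : Type) (h : A1 * A2 -> B) (c : seq ((A1 * A2 + K) * (unit + unit))) :
  pmap (@getL _ _) (unzip1 (map (mlift h) c)) = map h (pmap (@getL _ _) (unzip1 c)).
Proof. by elim: c => [|[[x|k] b] c IH] //=; rewrite IH. Qed.

Lemma reinsert_zip (c : seq ((A1 * A2 + K) * (unit + unit))) (v1 : seq C1) (v2 : seq C2) :
  size v1 = size (pmap (@getL _ _) (unzip1 c)) ->
  size v2 = size (pmap (@getL _ _) (unzip1 c)) ->
  zip (reinsert (unzip1 c) (zip v1 v2)) (unzip2 c) =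
  map pmerge (zip (zip (reinsert (unzip1 (map (mlift fst) c)) v1) (unzip2 c))
                  (zip (reinsert (unzip1 (map (mlift snd) c)) v2) (unzip2 c))).
Proof.
elim: c v1 v2 => [|[[x|k] b] c IH] v1 v2 //=; last by move=> H1 H2; rewrite IH.
by case: v1 v2 => [|y1 v1] [|y2 v2] //= /succn_inj H1 /succn_inj H2; rewrite IH.
Qed.

Lemma bsub_par (f1 : seq A1 -> seq C1) (f2 : seq A2 -> seq C2) w :
  length_preserving f1 -> length_preserving f2 ->
  bsub (fun s => zip (f1 (unzip1 s)) (f2 (unzip2 s))) w =
  map pmerge (zip (bsub f1 (map (mlift fst) w)) (bsub f2 (map (mlift snd) w))).
Proof.
move=> H1 H2; rewrite /bsub !(blocks_map (@marked_mlift _ _ _ _)) -!map_comp.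
rewrite zip_flatten_map => [|c]; last by rewrite /= !size_msub // !size_map.
rewrite map_flatten -map_comp; congr flatten; apply: eq_map => c /=.
rewrite /msub !getL_mlift reinsert_zip ?H1 ?H2 ?size_map //.
by rewrite /unzip2 -!map_comp.
Qed.

End Parallel.

Lemma bsub_par_CompPrime (X1 X2 Y1 Y2 K : pof)
    (f1 : seq (den X1) -> seq (den Y1)) (f2 : seq (den X2) -> seq (den Y2)) :
  length_preserving f1 -> length_preserving f2 ->
  CompPrime (Marked X1 K) (Marked Y1 K) (bsub f1) ->
  CompPrime (Marked X2 K) (Marked Y2 K) (bsub f2) ->
  CompPrime (Marked (PProd X1 X2) K) (Marked (PProd Y1 Y2) K)
    (bsub (fun s => zip (f1 (unzip1 s)) (f2 (unzip2 s)))).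
Proof.
move=> L1 L2 H1 H2.
pose split (p : den (Marked (PProd X1 X2) K)) : den (PProd (Marked X1 K) (Marked X2 K)) :=
  (mlift fst p, mlift snd p).
have Esplit : equivariant split by move=> pi _ [[[x1 x2]|k] b].
have Emerge : equivariant (@pmerge (den Y1) (den Y2) (den K)
    : den (PProd (Marked Y1 K) (Marked Y2 K)) -> den (Marked (PProd Y1 Y2) K)).
  by move=> pi _ [[[y1|k1] b1] [[y2|k2] b2]].
apply: (cp_ext _ _ _ _ (cp_seq _ _ _ _ _ (cp_hom _ _ _ Esplit)
          (cp_seq _ _ _ _ _ (cp_par _ _ _ _ _ _ H1 H2) (cp_hom _ _ _ Emerge)))) => w /=.
by rewrite bsub_par // /unzip1 /unzip2 -!map_comp.
Qed.

Lemma CompPrime_alongside (X Y X' Y' : pof) (m : seq (den X') -> seq (den Y'))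
    (tr : den X -> den X') (out : den (PProd Y' X) -> den Y) :
  CompPrime X' Y' m -> equivariant tr -> equivariant out ->
  CompPrime X Y (fun w => map out (zip (m (map tr w)) w)).
Proof.
move=> Hm Etr Eout.
have Epair : equivariant (fun x => (tr x, x) : den (PProd X' X)).
  by move=> pi bij x /=; rewrite Etr.
have Eid : equivariant (fun x : den X => x) by [].
apply: (cp_ext _ _ _ _ (cp_seq _ _ _ _ _ (cp_hom _ _ _ Epair)
          (cp_seq _ _ _ _ _ (cp_par _ _ _ _ _ _ Hm (cp_hom _ _ _ Eid))
             (cp_hom _ _ _ Eout)))) => w /=.
by rewrite /unzip1 /unzip2 -!map_comp map_id.
Qed.

Section Simulation.
Variables (A C A' C' K Q : Type) (d : Q -> A -> Q * C) (q0 : Q).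
Variables (d' : Q -> A' -> Q * C') (tr : (A + K) * (unit + unit) -> A')
          (out : C' * ((A + K) * (unit + unit)) -> (C + K) * (unit + unit)).

Definition skip_state q (x : A + K) : Q := if x is inl a then (d q a).1 else q.
Definition skip_out q (p : (A + K) * (unit + unit)) : (C + K) * (unit + unit) :=
  (match p.1 with inl a => inl (d q a).2 | inr k => inr k end, p.2).

Hypothesis sim_state :
  forall q p, (d' q (tr p)).1 = if marked p then q0 else skip_state q p.1.
Hypothesis sim_out : forall q p, out ((d' q (tr p)).2, p) = skip_out q p.

Definition simulate q w := map out (zip (mealy_run d' q (map tr w)) w).

Lemma simulate_cons q p w : simulate q (p :: w) =
  skip_out q p :: simulate (if marked p then q0 else skip_state q p.1) w.
Proof. by rewrite /simulate /= sim_out sim_state. Qed.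

Lemma msub_mealy_cons q p c : msub (mealy_run d q) (p :: c) =
  skip_out q p :: msub (mealy_run d (skip_state q p.1)) c.
Proof. by case: p => [[a|k] b]. Qed.

Lemma simulate_uncut q u : all (predC (@marked _)) u ->
  simulate q u = msub (mealy_run d q) u.
Proof.
elim: u q => [|p u IH] q //= /andP[/negbTE pu cu].
by rewrite simulate_cons msub_mealy_cons pu IH.
Qed.

Lemma simulate_cut q u x v : all (predC (@marked _)) u -> marked x ->
  simulate q (u ++ x :: v) = msub (mealy_run d q) (rcons u x) ++ simulate q0 v.
Proof.
elim: u q => [|p u IH] q /= => [_|/andP[/negbTE pu cu]] mx.
  by rewrite simulate_cons msub_mealy_cons mx.
by rewrite simulate_cons msub_mealy_cons pu IH.
Qed.

Lemma simulate_bsub w : simulate q0 w = bsub (mealy_run d q0) w.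
Proof.
elim/(@cut_ind _ (@marked (A + K))): w => [u cu|u x v cu mx IH].
  by rewrite simulate_uncut // /bsub blocks_uncut //= cats0.
by rewrite simulate_cut // IH /bsub blocks_cut.
Qed.

End Simulation.

Lemma act_atomfree (pi : atom -> atom) (X : pof) : atomfree X -> forall x, act pi X x = x.
Proof.
elim: X => //= [A IA B IB|A IA B IB] /andP[hA hB]; first by case=> a b /=; rewrite IA ?IB.
by case=> [a|b] /=; rewrite ?IA ?IB.
Qed.

Section MealyCase.
Variables (X Y K : pof) (Q : finType) (q0 : Q) (d : Q -> den X -> Q * den Y).
Hypotheses (afX : atomfree X) (afY : atomfree Y).

(* The separators are replaced by a single atom-free letter ... *)
Definition forget_sep (p : den (Marked X K)) : den (Marked X PUnit) :=
  (match p.1 with inl x => inl x | inr _ => inr tt end, p.2).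

Definition reset_step (q : Q) (p : den (Marked X PUnit)) : Q * den (Marked Y PUnit) :=
  (if marked p then q0 else skip_state d q p.1,
   (match p.1 with inl x => inl (d q x).2 | inr _ => inr tt end, p.2)).

Definition restore_sep (p : den (PProd (Marked Y PUnit) (Marked X K))) : den (Marked Y K) :=
  match p with
  | (_, (inr k, b)) => (inr k, b)
  | ((inl y, _), (inl _, b)) => (inl y, b)
  | ((inr _, _), (inl x, b)) => (inl (d q0 x).2, b)   (* unreachable *)
  end.

Lemma bsub_mealy_CompPrime : CompPrime (Marked X K) (Marked Y K) (bsub (mealy_run d q0)).
Proof.
have Eforget : equivariant forget_sep by move=> pi _ [[x|k] b].
have Erestore : equivariant restore_sep.
  by move=> pi _ [[[y|[]] b'] [[x|k] b]] //=; rewrite !act_atomfree.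
have Hm : CompPrime (Marked X PUnit) (Marked Y PUnit) (mealy_run reset_step q0).
  by apply: cp_mealy; rewrite /= ?afX ?afY.
apply: (cp_ext _ _ _ _ (CompPrime_alongside Hm Eforget Erestore)) => w.
by apply: simulate_bsub => q [[x|k] b].
Qed.

End MealyCase.

Section PropagationCase.
Variable K : pof.

(* Marks become "down" (which stops propagation) and separators become "eps"
   (which are transparent to it). *)
Definition prop_tr (p : den (Marked prop_in K)) : den prop_in :=
  if marked p then inr (inr tt) else if p.1 is inl s then s else inr (inl tt).

Definition prop_restore (p : den (PProd prop_out (Marked prop_in K))) : den (Marked prop_out K) :=
  match p with
  | (o, (inl (inr (inr _)), b)) => (inl o, b)
  | (_, (inl _, b)) => (inl (inr tt), b)
  | (_, (inr k, b)) => (inr k, b)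
  end.

Lemma bsub_prop_CompPrime :
  CompPrime (Marked prop_in K) (Marked prop_out K) (bsub atom_propagation).
Proof.
have Etr : equivariant prop_tr by move=> pi _ [[[a|[[]|[]]]|k] [[]|[]]].
have Erestore : equivariant prop_restore by move=> pi _ [o [[[a|[[]|[]]]|k] b]].
apply: (cp_ext _ _ _ _ (CompPrime_alongside cp_prop Etr Erestore)) => w /=.
rewrite (eq_bsub atom_propagation_mealy) atom_propagation_mealy.
by apply: simulate_bsub => q [[[a|[[]|[]]]|k] [[]|[]]].
Qed.

End PropagationCase.

Lemma bsub_CompPrime (K X Y : pof) (f : seq (den X) -> seq (den Y)) :
  CompPrime X Y f -> CompPrime (Marked X K) (Marked Y K) (bsub f).
Proof.
elim=> {X Y f} [X Y h Hh|X Y Q q0 d afX afY||X Y Z f g Hf IHf Hg IHg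
               |X1 Y1 X2 Y2 f1 f2 H1 IH1 H2 IH2|X Y f g _ IH E].
- exact: bsub_hom_CompPrime.
- exact: bsub_mealy_CompPrime.
- exact: bsub_prop_CompPrime.
- apply: (cp_ext _ _ _ _ (cp_seq _ _ _ _ _ IHf IHg)) => w.
  by apply: bsub_comp; apply: CompPrime_length Hf.
- by apply: bsub_par_CompPrime => //; apply: CompPrime_length.
- exact: (cp_ext _ _ _ _ IH (eq_bsub E)).
Qed.

Definition is_inr (A B : Type) (x : A + B) : bool := if x is inr _ then true else false.

Lemma chunks_blocks (A B : Type) (w : seq (A + B)) : chunks w = blocks (@is_inr _ _) w.
Proof. by elim: w => //= [[a|b] w ->]. Qed.

Lemma chunks_sorted (A B : Type) (w : seq (A + B)) :
  exists st, chunks w = map (fun p => map inl p.1 ++ map inr p.2) st.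
Proof.
elim: w => [|[a|b] w [st IH]] /=; first by exists [:: ([::], [::])].
  rewrite IH; case: st {IH} => [|[s t] st]; first by exists [:: ([:: a], [::])].
  by exists ((a :: s, t) :: st).
by rewrite IH; exists (([::], [:: b]) :: st).
Qed.

Lemma getL_inl (A B : Type) (s : seq A) : pmap (@getL A B) (map inl s) = s.
Proof. by elim: s => //= a s ->. Qed.

Lemma getL_sorted (A B : Type) (s : seq A) (t : seq B) :
  pmap (@getL _ _) (map inl s ++ map inr t) = s.
Proof. by rewrite pmap_cat getL_inl; elim: t => //; rewrite cats0. Qed.

Lemma getR_sorted (A B : Type) (s : seq A) (t : seq B) :
  pmap (@getR _ _) (map inl s ++ map inr t) = t.
Proof. by elim: s => //; elim: t => //= b t ->. Qed.

Lemma mapD_mapD' (S G D : pof) (f : seq (den S) -> seq (den G)) :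
  length_preserving f -> mapD D f =1 mapD' D (subD D f).
Proof.
move=> Lf w; rewrite /mapD /mapD'; have [st ->] := chunks_sorted w.
rewrite -!map_comp; congr flatten; apply: eq_map => -[s t] /=.
by rewrite /subD getL_sorted reinsert_sorted ?Lf // getR_sorted.
Qed.

Section Combinators.
Variables (S G D : pof).

(* sub: with no letter marked the whole word is a single block. *)
Definition unmarked (x : den (PSum S D)) : den (Marked S D) := (x, inl tt).

Lemma subD_CompPrime (f : seq (den S) -> seq (den G)) :
  CompPrime S G f -> CompPrime (PSum S D) (PSum G D) (subD D f).
Proof.
move=> Hf; have Lf := CompPrime_length Hf.
have Eunmarked : equivariant unmarked by [].
have Efst : equivariant (fst : den (Marked G D) -> den (PSum G D)) by [].
apply: (cp_ext _ _ _ _ (cp_seq _ _ _ _ _ (cp_hom _ _ _ Eunmarked)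
          (cp_seq _ _ _ _ _ (bsub_CompPrime D Hf) (cp_hom _ _ _ Efst)))) => w /=.
rewrite /bsub blocks_uncut /=; last by elim: w.
have := unzip1_msub Lf (map unmarked w); rewrite /unzip1 cats0 => ->.
by rewrite -map_comp map_id.
Qed.

(* map': the separators are marked, so the blocks are exactly the chunks. *)
Definition mark_sep (x : den (PSum S D)) : den (Marked (PSum S D) PEmpty) :=
  (inl x, if x is inr _ then inr tt else inl tt).

Definition from_inl (y : den (PSum G PEmpty)) : den G :=
  match y with inl y => y | inr e => match e with end end.

Lemma mapD'_CompPrime (f : seq (den (PSum S D)) -> seq (den G)) :
  CompPrime (PSum S D) G f -> CompPrime (PSum S D) G (mapD' D f).
Proof.
move=> Hf; have Lf := CompPrime_length Hf.
have Emark : equivariant mark_sep by move=> pi _ [s|d].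
have Efrom : equivariant (fun p : den (Marked G PEmpty) => from_inl p.1).
  by move=> pi _ [[y|[]] b].
apply: (cp_ext _ _ _ _ (cp_seq _ _ _ _ _ (cp_hom _ _ _ Emark)
          (cp_seq _ _ _ _ _ (bsub_CompPrime PEmpty Hf) (cp_hom _ _ _ Efrom)))) => w /=.
rewrite /bsub (@blocks_map _ _ (@is_inr _ _)) => [|[s|d]] //.
rewrite -chunks_blocks map_flatten -!map_comp; congr flatten; apply: eq_map => c /=.
have Ec : unzip1 (map mark_sep c) = map inl c by rewrite /unzip1 -map_comp.
have := unzip1_msub Lf (map mark_sep c).
rewrite Ec getL_inl reinsert_inl ?Lf // => E.
transitivity (map from_inl (unzip1 (msub f (map mark_sep c)))).
  by rewrite /unzip1 -map_comp.
by rewrite E -map_comp map_id.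
Qed.

End Combinators.

Theorem mainTheorem12 (S G D : pof) :
  (forall f : seq (den S) -> seq (den G),
      CompPrime S G f ->
      CompPrime (PSum S D) (PSum G D) (mapD D f) /\
      CompPrime (PSum S D) (PSum G D) (subD D f)) /\
  (forall f : seq (den (PSum S D)) -> seq (den G),
      CompPrime (PSum S D) G f ->
      CompPrime (PSum S D) G (mapD' D f)).
Proof.
split=> [f Hf|f Hf]; last exact: mapD'_CompPrime.
have Hsub : CompPrime (PSum S D) (PSum G D) (subD D f) by apply: subD_CompPrime.
split=> //; apply: (cp_ext _ _ _ _ (mapD'_CompPrime Hsub)) => w.
by rewrite (mapD_mapD' (CompPrime_length Hf)).
Qed.
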